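(* Let $f:\mathbb{R}^n\to\mathbb{R}$ be convex and differentiable with $\nabla f$ $L$-Lipschitz continuous, and assume $X^*$ is non-empty. Then the sequences $\{x^k\},\{z^k\}$ generated by Algorithm 3 (with $\nabla f(x^k)\ne0$ for all $k$) satisfy, for every $x^*\in X^*$ and every $k$, $$\|x^{k+1}-x^*\|^2\le\|x^k-x^*\|^2-\kappa_4\|x^k-z^k\|^2,$$ where $\kappa_4=\eta(2-\eta)\alpha_{\min}\left((1-\beta)\left(1-\frac{L\overline{h}}{4}\right)+\beta(1-\nu)\right)>0$ and $\alpha_{\min}=\frac{(1-\beta)\left(1-\frac{L\overline{h}}{4}\right)+\beta(1-\nu)}{2+2\beta^2\nu^2}$.
   Context: $X^*=\{x:\nabla f(x)=0\}$ (the set of minimizers of the convex $f$). Algorithm 3: parameters $0<\mu<\nu<1$, $0<\underline{h}<1\le\gamma_0^0\le\overline{h}<\frac4L$, $0\le\beta\le1$, $\theta\in(0,1)$, $\tau>1$, $\eta\in(0,2)$, starting point $x^0$; run while $\nabla f(x^k)\neq0$. At iteration $k$: for $\gamma>0$ let $z^k(\gamma)=x^k-\gamma\nabla f(x^k)$ and $r_k(\gamma)=\gamma\|\nabla f(z^k(\gamma))-\nabla f(x^k)\|/\|z^k(\gamma)-x^k\|$; starting from $\gamma_0^k$, while $r_k(\gamma_l^k)>\nu$ set $\gamma_{l+1}^k=\gamma_l^k\theta\min\{1,1/r_k(\gamma_l^k)\}$; let $h_k$ be the first $\gamma_l^k$ with $r_k(\gamma_l^k)\le\nu$. Then $z^k=x^k-h_k\nabla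 f(x^k)$ and $x^{k+1}=x^k-\eta\alpha_kh_k\big(\nabla f(x^k)-\beta(\nabla f(x^k)-\nabla f(z^k))\big)$ with $$\alpha_k=\frac{(1-\beta)\left(1-\frac{Lh_k}{4}\right)\|x^k-z^k\|^2+\beta\langle x^k-z^k,h_k\nabla f(z^k)\rangle}{h_k^2\|\nabla f(x^k)-\beta(\nabla f(x^k)-\nabla f(z^k))\|^2};$$ finally $\gamma_0^{k+1}=\mathbf{P}_{[\underline{h},\overline{h}]}(\tau h_k)$ if $r_k(h_k)\le\mu$, else $\gamma_0^{k+1}=\mathbf{P}_{[\underline{h},\overline{h}]}(h_k)$, where $\mathbf{P}_{[a,b]}$ is projection onto $[a,b]$. *)

From HB Require Import structures.
From mathcomp Require Import all_boot all_order all_algebra.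
From mathcomp Require Import all_classical all_reals all_analysis.
Set Implicit Arguments. Unset Strict Implicit. Unset Printing Implicit Defensive.
Import Order.TTheory GRing.Theory Num.Theory.
Import numFieldNormedType.Exports.
Local Open Scope ring_scope.

Section Defs.
Variables (R : realType) (n : nat).
Notation vec := 'rV[R]_n.

Definition inner (u v : vec) : R := \sum_(i < n) u ord0 i * v ord0 i.
Definition enorm (u : vec) : R := Num.sqrt (inner u u).

Definition convex_fun (f : vec -> R) : Prop :=
  forall (x y : vec) (t : R), 0 <= t -> t <= 1 ->
    f (t *: x + (1 - t) *: y) <= t * f x + (1 - t) * f y.

Definition is_gradient (f : vec -> R) (g : vec -> vec) : Prop :=
  forall x : vec, differentiable f x /\ forall v : vec, 'd f x v = inner (g x) v.

Definition lipschitz_grad (g : vec -> vec) (L : R) : Prop :=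
  forall x y : vec, enorm (g x - g y) <= L * enorm (x - y).

Definition proj_int (a b t : R) : R := Num.max a (Num.min b t).

Definition ratio (g : vec -> vec) (x : vec) (gam : R) : R :=
  let z := x - gam *: g x in
  gam * enorm (g z - g x) / enorm (z - x).

Definition ls_step (g : vec -> vec) (x : vec) (theta gam : R) : R :=
  gam * theta * Num.min 1 (1 / ratio g x gam).

Definition ls_seq (g : vec -> vec) (x : vec) (theta gam0 : R) (l : nat) : R :=
  iter l (ls_step g x theta) gam0.

Definition ls_result (g : vec -> vec) (x : vec) (theta nu gam0 h : R) : Prop :=
  exists l : nat,
    [/\ ratio g x (ls_seq g x theta gam0 l) <= nu,
        (forall j : nat, (j < l)%N -> nu < ratio g x (ls_seq g x theta gam0 j))
      & h = ls_seq g x theta gam0 l].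

Definition alpha_step (g : vec -> vec) (L beta : R) (x z : vec) (h : R) : R :=
  ((1 - beta) * (1 - L * h / 4) * enorm (x - z) ^+ 2
     + beta * inner (x - z) (h *: g z))
  / (h ^+ 2 * enorm (g x - beta *: (g x - g z)) ^+ 2).

Definition algorithm3 (g : vec -> vec)
    (L mu nu hlow hbar beta theta tau eta : R) (x0 : vec)
    (x z : nat -> vec) (h gam0 : nat -> R) : Prop :=
  x 0%N = x0 /\
  [/\ forall k, g (x k) != 0,
      forall k, ls_result g (x k) theta nu (gam0 k) (h k),
      forall k, z k = x k - h k *: g (x k),
      forall k, x k.+1 = x k - (eta * alpha_step g L beta (x k) (z k) (h k) * h k)
                                *: (g (x k) - beta *: (g (x k) - g (z k)))
    & forall k, gam0 k.+1 =
        if ratio g (x k) (h k) <= mu then proj_int hlow hbar (tau * h k)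
        else proj_int hlow hbar (h k)].

End Defs.

From Pilot Require Import Defs.
From HB Require Import structures.
From mathcomp Require Import all_boot all_order all_algebra.
From mathcomp Require Import all_classical all_reals all_analysis.
From mathcomp Require Import ring lra.
Import Order.TTheory GRing.Theory Num.Theory.
Import numFieldNormedType.Exports.
Local Open Scope ring_scope.

Set Implicit Arguments.
Unset Strict Implicit.

(* The gradient of a convex function with L-Lipschitz gradient is
   (1/L)-cocoercive: <g x - g y, x - y> >= |g x - g y|^2 / L.  Writing
   u = x^k - z^k = h_k g(x^k), the update direction d = u + beta h_k (g z^k - g x^k)
   then satisfies <x^k - x*, d> >= N_k >= c |u|^2, where N_k is the numerator of
   alpha_k and c = (1-beta)(1 - L hbar/4) + beta(1 - nu); the line-search test
   r_k(h_k) <= nu bounds |d|^2 <= (2 + 2 beta^2 nu^2) |u|^2.  Since alpha_k = N_k/|d|^2,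
   the relaxed step x^{k+1} = x^k - eta alpha_k d decreases |x - x*|^2 by at least
   eta (2 - eta) N_k^2/|d|^2 >= kappa4 |u|^2. *)

Section InnerProduct.
Variables (R : realType) (n : nat).
Notation vec := 'rV[R]_n.
Implicit Types u v w : vec.

Lemma innerC u v : inner u v = inner v u.
Proof. by apply: eq_bigr => i _; rewrite mulrC. Qed.

Lemma innerDl u v w : inner (u + v) w = inner u w + inner v w.
Proof. by rewrite /inner -big_split; apply: eq_bigr => i _; rewrite mxE mulrDl. Qed.

Lemma innerZl a u v : inner (a *: u) v = a * inner u v.
Proof. by rewrite /inner mulr_sumr; apply: eq_bigr => i _; rewrite mxE mulrA. Qed.

Lemma innerNl u v : inner (- u) v = - inner u v.
Proof. by rewrite -scaleN1r innerZl mulN1r. Qed.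

Lemma innerBl u v w : inner (u - v) w = inner u w - inner v w.
Proof. by rewrite innerDl innerNl. Qed.

Lemma innerDr u v w : inner w (u + v) = inner w u + inner w v.
Proof. by rewrite !(innerC w) innerDl. Qed.

Lemma innerZr a u v : inner v (a *: u) = a * inner v u.
Proof. by rewrite !(innerC v) innerZl. Qed.

Lemma innerNr u v : inner v (- u) = - inner v u.
Proof. by rewrite !(innerC v) innerNl. Qed.

Lemma innerBr u v w : inner w (u - v) = inner w u - inner w v.
Proof. by rewrite innerDr innerNr. Qed.

Lemma inner0l u : inner 0 u = 0.
Proof. by rewrite -(scale0r 0) innerZl mul0r. Qed.

Lemma inner_ge0 u : 0 <= inner u u.
Proof. by apply: sumr_ge0 => i _; rewrite -expr2 sqr_ge0. Qed.

Lemma inner_eq0 u : inner u u = 0 -> u = 0.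
Proof.
move=> /eqP; rewrite psumr_eq0 => [/allP uu0|i _]; last by rewrite -expr2 sqr_ge0.
apply/rowP => i; rewrite mxE.
by have /implyP/(_ isT) := uu0 i (mem_index_enum _); rewrite mulf_eq0 orbb => /eqP.
Qed.

Lemma enorm_ge0 u : 0 <= enorm u.
Proof. exact: sqrtr_ge0. Qed.

Lemma enorm_sq u : enorm u ^+ 2 = inner u u.
Proof. by rewrite sqr_sqrtr // inner_ge0. Qed.

Lemma enorm_eq0 u : enorm u = 0 -> u = 0.
Proof. by move=> u0; apply: inner_eq0; rewrite -enorm_sq u0 expr0n. Qed.

Lemma enormZ a u : enorm (a *: u) = `|a| * enorm u.
Proof. by rewrite /enorm innerZl innerZr mulrA -expr2 sqrtrM ?sqr_ge0 // sqrtr_sqr. Qed.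

Lemma enormN u : enorm (- u) = enorm u.
Proof. by rewrite -scaleN1r enormZ normrN1 mul1r. Qed.

Lemma cauchy_schwarz u v : inner u v <= enorm u * enorm v.
Proof.
have [/enorm_eq0 ->|nu0] := eqVneq (enorm u) 0.
  by rewrite inner0l mulr_ge0 ?enorm_ge0.
have [/enorm_eq0 ->|nv0] := eqVneq (enorm v) 0.
  by rewrite innerC inner0l mulr_ge0 ?enorm_ge0.
have pu : 0 < enorm u by rewrite lt_def nu0 enorm_ge0.
have pv : 0 < enorm v by rewrite lt_def nv0 enorm_ge0.
have := inner_ge0 (enorm v *: u - enorm u *: v).
rewrite !(innerBl, innerBr, innerZl, innerZr) (innerC v u) -!enorm_sq.
set a := enorm u; set b := enorm v; set c := inner u v => key.
have : 0 <= (a * b) * (2 * (a * b - c)) by nra.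
by rewrite pmulr_rge0 ?mulr_gt0 // pmulr_rge0 // subr_ge0.
Qed.

Lemma inner_addZ u w b :
  inner (u + b *: w) (u + b *: w) = inner u u + 2 * b * inner u w + b ^+ 2 * inner w w.
Proof. by rewrite !(innerDl, innerDr, innerZl, innerZr) (innerC w u); ring. Qed.

Lemma inner_addZ_le u w b :
  inner (u + b *: w) (u + b *: w) <= 2 * inner u u + 2 * b ^+ 2 * inner w w.
Proof. by have := inner_ge0 (u + (- b) *: w); rewrite !inner_addZ sqrrN; lra. Qed.

(* With a = N / |d|^2 the quadratic term eta^2 a^2 |d|^2 equals eta^2 a N, while
   the cross term is at least 2 eta a N. *)
Lemma relaxed_step_sq (y d : vec) (N eta : R) :
  0 < inner d d -> 0 <= N -> N <= inner y d -> 0 <= eta ->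
  enorm (y - (eta * (N / inner d d)) *: d) ^+ 2
    <= enorm y ^+ 2 - eta * (2 - eta) * (N ^+ 2 / inner d d).
Proof.
move=> dd_gt0 N_ge0 N_le eta_ge0.
rewrite -scaleNr !enorm_sq inner_addZ.
set a := N / inner d d.
have a_ge0 : 0 <= a by rewrite divr_ge0 // ltW.
have aN : a * inner d d = N by rewrite divfK ?gt_eqF.
have cross : eta * a * N <= eta * a * inner y d by apply: ler_wpM2l => //; exact: mulr_ge0.
have -> : N ^+ 2 / inner d d = a * N by rewrite /a expr2 mulrAC.
have -> : (- (eta * a)) ^+ 2 * inner d d = eta ^+ 2 * (a * N) by rewrite -aN; ring.
lra.
Qed.

End InnerProduct.

Section ConvexGradient.
Variables (R : realType) (n : nat) (f : 'rV[R]_n -> R) (g : 'rV[R]_n -> 'rV[R]_n) (L : R).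
Local Open Scope classical_set_scope.
Hypotheses (f_convex : convex_fun f) (f_grad : is_gradient f g).
Hypotheses (g_lip : lipschitz_grad g L) (L_gt0 : 0 < L).

Lemma convex_gradient_ineq x y : f x + inner (g x) (y - x) <= f y.
Proof.
have [dfx dfE] := f_grad x.
set v := y - x.
rewrite -dfE -deriveE // /derive -lerBrDl.
set q := (fun t : R => _).
have q_cvg : q @ 0^'+ --> lim (q @ 0^').
  by apply: cvg_dnbhs_at_right; exact: diff_derivable.
apply: (ler_cvg_to q_cvg (cvg_cst (f y - f x))).
near=> t.
have t_gt0 : 0 < t by near: t; exact: nbhs_right_gt.
have t_lt1 : t < 1 by near: t; exact: nbhs_right_lt.
have := @f_convex y x t (ltW t_gt0) (ltW t_lt1).
have -> : t *: y + (1 - t) *: x = t *: v + x.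
  by rewrite /v scalerBr scalerBl scale1r -addrA [- _ + x]addrC.
rewrite /q /= /shift => conv.
rewrite -[t^-1 *: _]/(t^-1 * _) mulrC ler_pdivrMr //.
lra.
Unshelve. all: by end_near.
Qed.

Lemma convex_step_ineq y w : f (y + w) <= f y + inner (g (y + w)) w.
Proof.
have := convex_gradient_ineq (y + w) y.
by rewrite opprD addNKr innerNr; lra.
Qed.

Lemma inner_grad_lipschitz x y v :
  inner (g y) v <= inner (g x) v + L * enorm (y - x) * enorm v.
Proof.
rewrite -(subrK (g x) (g y)) innerDl [_ + inner (g x) v]addrC lerD2l.
apply: (le_trans (cauchy_schwarz _ _)).
by apply: ler_wpM2r; [exact: enorm_ge0 | exact: g_lip].
Qed.

(* Convexity along the grid x + (m/N) v, m <= N, loses only the Lipschitz error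
   of each of the N increments; the errors add up to L |v|^2 (N + 1) / (2 N). *)
Lemma descent_grid x v (N : nat) : (0 < N)%N ->
  f (x + v) <= f x + inner (g x) v + L * enorm v ^+ 2 * N.+1%:R / (2 * N%:R).
Proof.
move=> N_gt0.
have N_neq0 : N%:R != 0 :> R by rewrite pnatr_eq0 -lt0n.
set s : R := N%:R^-1.
have s_gt0 : 0 < s by rewrite invr_gt0 ltr0n.
set a := inner (g x) v.
pose p m := x + (m%:R * s) *: v.
have grid m :
    f (p m) <= f x + m%:R * s * a + L * enorm v ^+ 2 * s ^+ 2 * (m%:R * (m%:R + 1)) / 2.
  elim: m => [|m IH]; first by rewrite /p mulr0n !mul0r scale0r addr0; lra.
  have pS : p m.+1 = p m + s *: v by rewrite /p -addrA -scalerDl mulrSr mulrDl mul1r.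
  have step := convex_step_ineq (p m) (s *: v).
  rewrite -pS innerZr in step.
  have lip := inner_grad_lipschitz x (p m.+1) v.
  have pSx : p m.+1 - x = (m.+1%:R * s) *: v by rewrite addrC addKr.
  have ms_ge0 : 0 <= m.+1%:R * s by rewrite mulr_ge0 ?ler0n ?ltW.
  rewrite pSx enormZ ger0_norm // -/a in lip.
  have := ler_wpM2l (ltW s_gt0) lip.
  rewrite [m.+1%:R]mulrSr; nra.
have := grid N.
rewrite /p (_ : N%:R * s = 1) ?mulfV // scale1r mul1r [N.+1%:R]mulrSr.
have -> : L * enorm v ^+ 2 * s ^+ 2 * (N%:R * (N%:R + 1)) / 2
        = L * enorm v ^+ 2 * (N%:R + 1) / (2 * N%:R) by rewrite /s; field.
by [].
Qed.

Lemma descent_lemma x v : f (x + v) <= f x + inner (g x) v + L / 2 * enorm v ^+ 2.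
Proof.
set c := L * enorm v ^+ 2.
have c_ge0 : 0 <= c by rewrite mulr_ge0 ?exprn_ge0 ?enorm_ge0 ?ltW.
rewrite (_ : L / 2 * _ = c / 2); last by rewrite /c mulrAC.
rewrite leNgt; apply/negP => gap.
set d := f (x + v) - (f x + inner (g x) v + c / 2).
have d_gt0 : 0 < d by rewrite subr_gt0.
set N := Num.bound (c / (2 * d)).
have N_gt0 : (0 < N)%N by [].
have : c / N%:R < 2 * d.
  rewrite ltr_pdivrMr ?ltr0n // mulrC -ltr_pdivrMr ?mulr_gt0 //.
  by apply: archi_boundP; rewrite divr_ge0 // mulr_ge0 // ltW.
have := descent_grid x v N_gt0.
rewrite -/c (_ : c * N.+1%:R / (2 * N%:R) = c / 2 + (c / N%:R) / 2); last first.
  by rewrite mulrSr; field; rewrite pnatr_eq0 -lt0n.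
move: d_gt0; rewrite /d; lra.
Qed.

(* Minimising the quadratic upper bound of the descent lemma at y - (g y - g x)/L. *)
Lemma gradient_gap_lower x y :
  f x + inner (g x) (y - x) + inner (g y - g x) (g y - g x) / (2 * L) <= f y.
Proof.
set d := g y - g x.
set w := y - L^-1 *: d.
have lower := convex_gradient_ineq x w.
have upper := descent_lemma y (w - y).
rewrite addrC subrK in upper.
have ewy : w - y = - (L^-1 *: d) by rewrite /w addrC addKr.
have ewx : w - x = (y - x) - L^-1 *: d by rewrite /w addrAC.
rewrite ewx innerBr innerZr in lower.
rewrite ewy enormN enormZ exprMn enorm_sq innerNr innerZr in upper.
have Linv_ge0 : 0 <= L^-1 by rewrite invr_ge0 ltW.
rewrite (ger0_norm Linv_ge0) in upper.
have gyd : inner (g y) d = inner (g x) d + inner d d by rewrite {2}/d innerBl addrC subrK.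
rewrite gyd mulrDr in upper.
have quad : L / 2 * (L^-1 ^+ 2 * inner d d) = L^-1 * inner d d / 2.
  by field; rewrite gt_eqF.
rewrite quad in upper.
have -> : inner d d / (2 * L) = L^-1 * inner d d / 2 by field; rewrite gt_eqF.
lra.
Qed.

Lemma gradient_cocoercive x y :
  inner (g x - g y) (g x - g y) / L <= inner (g x - g y) (x - y).
Proof.
have gxy := gradient_gap_lower x y.
have gyx := gradient_gap_lower y x.
rewrite -(opprB (g x)) innerNl innerNr opprK -(opprB x y) innerNr in gxy.
rewrite [in X in _ <= X]innerBl.
have -> : inner (g x - g y) (g x - g y) / L
        = inner (g x - g y) (g x - g y) / (2 * L) * 2 by field; rewrite gt_eqF.
lra.
Qed.

End ConvexGradient.

Definition descent_coef (R : realType) (L hbar beta nu : R) : R :=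
  (1 - beta) * (1 - L * hbar / 4) + beta * (1 - nu).

Definition direction_coef (R : realType) (beta nu : R) : R := 2 + 2 * beta ^+ 2 * nu ^+ 2.

Lemma descent_coef_gt0 (R : realType) (L hbar beta nu : R) :
  L * hbar < 4 -> 0 <= beta -> beta <= 1 -> nu < 1 -> 0 < descent_coef L hbar beta nu.
Proof.
move=> Lh_lt4 beta_ge0 beta_le1 nu_lt1.
have A_gt0 : 0 < 1 - L * hbar / 4 by lra.
have B_gt0 : 0 < 1 - nu by lra.
rewrite /descent_coef; move: A_gt0 B_gt0.
set A := 1 - L * hbar / 4; set B := 1 - nu; nra.
Qed.

Lemma direction_coef_gt0 (R : realType) (beta nu : R) : 0 < direction_coef beta nu.
Proof. by rewrite /direction_coef; have := sqr_ge0 beta; have := sqr_ge0 nu; nra. Qed.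

Section OneStep.
Variables (R : realType) (n : nat) (g : 'rV[R]_n -> 'rV[R]_n) (L : R).
Hypothesis L_gt0 : 0 < L.
Hypothesis g_cocoercive :
  forall x y, inner (g x - g y) (g x - g y) / L <= inner (g x - g y) (x - y).
Variables (beta nu hbar h : R) (x z xs : 'rV[R]_n).
Hypotheses (beta_ge0 : 0 <= beta) (beta_le1 : beta <= 1) (h_gt0 : 0 < h) (h_le : h <= hbar).
Hypotheses (z_def : z = x - h *: g x) (gx_neq0 : g x != 0) (ratio_le : Defs.ratio g x h <= nu).
Hypothesis gxs : g xs = 0.

Let u := x - z.
Let w := h *: (g z - g x).
Let d := h *: (g x - beta *: (g x - g z)).
Let numer := (1 - beta) * (1 - L * h / 4) * enorm u ^+ 2 + beta * inner u (h *: g z).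

Lemma step_u_eq : u = h *: g x.
Proof. by rewrite /u z_def subKr. Qed.

Lemma step_u_gt0 : 0 < enorm u.
Proof.
rewrite step_u_eq enormZ ger0_norm ?ltW // mulr_gt0 // lt_def enorm_ge0 andbT.
by apply: contra gx_neq0 => /eqP /enorm_eq0 ->.
Qed.

Lemma step_w_le : enorm w <= nu * enorm u.
Proof.
move: ratio_le; rewrite /Defs.ratio /= -z_def.
have -> : enorm (z - x) = enorm u by rewrite -enormN opprB.
by rewrite ler_pdivrMr ?step_u_gt0 // /w enormZ ger0_norm // ltW.
Qed.

Lemma step_d_eq : d = u + beta *: w.
Proof. by rewrite /d step_u_eq /w; apply/rowP => i; rewrite !mxE; ring. Qed.

Lemma step_d_le : inner d d <= direction_coef beta nu * enorm u ^+ 2.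
Proof.
rewrite step_d_eq; apply: (le_trans (inner_addZ_le _ _ _)).
have w_sq : enorm w ^+ 2 <= nu ^+ 2 * enorm u ^+ 2.
  by have := step_w_le; have := enorm_ge0 w; have := enorm_ge0 u; nra.
rewrite -!enorm_sq /direction_coef; have := sqr_ge0 beta; nra.
Qed.

Lemma step_numer_ge : descent_coef L hbar beta nu * enorm u ^+ 2 <= numer.
Proof.
have hgz : h *: g z = u + w by rewrite step_u_eq /w; apply/rowP => i; rewrite !mxE; ring.
have uw : - (nu * enorm u ^+ 2) <= inner u w.
  have := cauchy_schwarz (- u) w; rewrite innerNl enormN.
  have := ler_wpM2l (enorm_ge0 u) step_w_le.
  by rewrite expr2; lra.
have U_ge0 : 0 <= enorm u ^+ 2 by rewrite sqr_ge0.
have Lh : (1 - L * hbar / 4) <= 1 - L * h / 4.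
  by rewrite lerD2l lerN2 ler_pM2r // ler_pM2l.
rewrite /numer /descent_coef hgz innerDr -enorm_sq.
have b1 : 0 <= 1 - beta by rewrite subr_ge0.
have := ler_wpM2l b1 (ler_wpM2r U_ge0 Lh); have := ler_wpM2l beta_ge0 uw.
lra.
Qed.

Lemma step_numer_le : numer <= inner (x - xs) d.
Proof.
have gx_coco := g_cocoercive x xs; have gz_coco := g_cocoercive z xs.
rewrite gxs !subr0 in gx_coco gz_coco.
have gz_mono : 0 <= inner (z - xs) (g z).
  rewrite innerC; apply: (le_trans _ gz_coco).
  by rewrite divr_ge0 ?inner_ge0 // ltW.
have gx_lin : (1 - L * h / 4) * enorm u ^+ 2 <= h * inner (g x) (x - xs).
  apply: (le_trans _ (ler_wpM2l (ltW h_gt0) gx_coco)).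
  rewrite step_u_eq enorm_sq innerZl innerZr -subr_ge0.
  have -> : h * (inner (g x) (g x) / L) - (1 - L * h / 4) * (h * (h * inner (g x) (g x)))
          = h * inner (g x) (g x) * (2 - L * h) ^+ 2 / (4 * L) by field; rewrite gt_eqF.
  apply: divr_ge0; last by rewrite mulr_ge0 // ltW.
  by rewrite mulr_ge0 ?sqr_ge0 // mulr_ge0 ?inner_ge0 // ltW.
have dE : d = (1 - beta) *: (h *: g x) + beta *: (h *: g z).
  by rewrite /d; apply/rowP => i; rewrite !mxE; ring.
have xsz : inner (x - xs) (g z) = inner u (g z) + inner (z - xs) (g z).
  by rewrite -innerDl /u addrA subrK.
rewrite /numer dE innerDr !innerZr xsz (innerC _ (g x)).
have b1 : 0 <= 1 - beta by rewrite subr_ge0.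
have := ler_wpM2l b1 gx_lin; have := mulr_ge0 (mulr_ge0 beta_ge0 (ltW h_gt0)) gz_mono.
lra.
Qed.

Lemma step_alphaE : alpha_step g L beta x z h = numer / inner d d.
Proof.
by rewrite /alpha_step -/u /numer -enorm_sq /d enormZ exprMn ger0_norm // ltW.
Qed.

Lemma algorithm3_step_decrease (eta : R) :
  0 <= eta -> eta <= 2 -> 0 < descent_coef L hbar beta nu ->
  enorm (x - (eta * alpha_step g L beta x z h * h) *: (g x - beta *: (g x - g z)) - xs) ^+ 2
  <= enorm (x - xs) ^+ 2
     - eta * (2 - eta) * (descent_coef L hbar beta nu / direction_coef beta nu)
       * descent_coef L hbar beta nu * enorm (x - z) ^+ 2.
Proof.
set c := descent_coef L hbar beta nu; set K := direction_coef beta nu.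
move=> eta_ge0 eta_le2 c_gt0.
have U_gt0 : 0 < enorm u ^+ 2 by rewrite exprn_gt0 ?step_u_gt0.
have cU_le : c * enorm u ^+ 2 <= numer := step_numer_ge.
have numer_le := step_numer_le.
have numer_gt0 : 0 < numer by apply: lt_le_trans cU_le; rewrite mulr_gt0.
have dd_gt0 : 0 < inner d d.
  rewrite lt_def inner_ge0 andbT; apply/eqP => /inner_eq0 d0.
  by move: numer_le; rewrite d0 innerC inner0l; lra.
have -> : x - (eta * alpha_step g L beta x z h * h) *: (g x - beta *: (g x - g z)) - xs
        = (x - xs) - (eta * (numer / inner d d)) *: d.
  by rewrite step_alphaE /d; apply/rowP => i; rewrite !mxE; field; rewrite gt_eqF.
apply: le_trans (relaxed_step_sq dd_gt0 (ltW numer_gt0) numer_le eta_ge0) _.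
rewrite lerD2l lerN2 -/u.
have K_gt0 : 0 < K := direction_coef_gt0 beta nu.
set U := enorm u ^+ 2 in U_gt0 cU_le *.
have -> : eta * (2 - eta) * (c / K) * c * U = eta * (2 - eta) * (c / K * c * U) by ring.
apply: ler_wpM2l; first by rewrite mulr_ge0 // subr_ge0.
have cKU_ge0 : 0 <= c / K * c * U.
  by apply/ltW/mulr_gt0 => //; apply: mulr_gt0 => //; exact: divr_gt0.
rewrite ler_pdivlMr //; apply: le_trans (ler_wpM2l cKU_ge0 step_d_le) _.
have -> : c / K * c * U * (K * U) = (c * U) ^+ 2 by field; rewrite gt_eqF.
have cU_gt0 := mulr_gt0 c_gt0 U_gt0; nra.
Qed.

End OneStep.

Lemma ls_step_bounds (R : realType) (n : nat) (g : 'rV[R]_n -> 'rV[R]_n) x (theta gam : R) :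
  0 < theta -> theta < 1 -> 0 < gam -> 0 < Defs.ratio g x gam ->
  0 < ls_step g x theta gam <= gam.
Proof.
move=> theta_gt0 theta_lt1 gam_gt0 r_gt0; rewrite /ls_step.
set m := Num.min 1 (1 / Defs.ratio g x gam).
have m_gt0 : 0 < m by rewrite lt_min ltr01 divr_gt0.
have m_le1 : m <= 1 by rewrite ge_min lexx.
apply/andP; split; first by apply: mulr_gt0 => //; apply: mulr_gt0.
rewrite -mulrA; apply: ler_piMr; first exact: ltW.
by apply: le_trans (ltW theta_lt1); apply: ler_piMr => //; exact: ltW.
Qed.

Lemma ls_result_bounds (R : realType) (n : nat) (g : 'rV[R]_n -> 'rV[R]_n) x
    (theta nu gam0 h : R) :
  0 < theta -> theta < 1 -> 0 <= nu -> 0 < gam0 -> ls_result g x theta nu gam0 h ->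
  [/\ 0 < h, h <= gam0 & Defs.ratio g x h <= nu].
Proof.
move=> theta_gt0 theta_lt1 nu_ge0 gam0_gt0 [l [ratio_le ratio_gt ->]].
suff /andP[h_gt0 h_le] : 0 < ls_seq g x theta gam0 l <= gam0 by split.
elim: l ratio_gt {ratio_le} => [|l IH] ratio_gt; first by rewrite /ls_seq /= lexx andbT.
have /andP[seq_gt0 seq_le] : 0 < ls_seq g x theta gam0 l <= gam0.
  by apply: IH => j j_lt; apply: ratio_gt; rewrite ltnS ltnW.
have r_gt0 : 0 < Defs.ratio g x (ls_seq g x theta gam0 l).
  by apply: le_lt_trans nu_ge0 (ratio_gt l (ltnSn l)).
have /andP[-> step_le] := ls_step_bounds theta_gt0 theta_lt1 seq_gt0 r_gt0.
by rewrite /ls_seq iterS (le_trans step_le).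
Qed.

Lemma proj_int_bounds (R : realType) (a b t : R) : a <= b -> a <= proj_int a b t <= b.
Proof. by move=> ab; rewrite /proj_int le_max lexx ge_max ab ge_min lexx. Qed.

Unset Implicit Arguments.
Set Strict Implicit.

Theorem proposition3 (R : realType) (n : nat)
    (f : 'rV[R]_n -> R) (g : 'rV[R]_n -> 'rV[R]_n) (L : R)
    (mu nu hlow hbar beta theta tau eta : R) (x0 : 'rV[R]_n)
    (x z : nat -> 'rV[R]_n) (h gam0 : nat -> R) :
  convex_fun f -> is_gradient f g -> 0 < L -> lipschitz_grad g L ->
  (exists xs : 'rV[R]_n, g xs = 0) ->
  0 < mu -> mu < nu -> nu < 1 ->
  0 < hlow -> hlow < 1 -> 1 <= gam0 0%N -> gam0 0%N <= hbar -> hbar < 4 / L ->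
  0 <= beta -> beta <= 1 -> 0 < theta -> theta < 1 -> 1 < tau ->
  0 < eta -> eta < 2 ->
  algorithm3 g L mu nu hlow hbar beta theta tau eta x0 x z h gam0 ->
  let alpha_min :=
    ((1 - beta) * (1 - L * hbar / 4) + beta * (1 - nu)) / (2 + 2 * beta ^+ 2 * nu ^+ 2) in
  let kappa4 :=
    eta * (2 - eta) * alpha_min * ((1 - beta) * (1 - L * hbar / 4) + beta * (1 - nu)) in
  0 < kappa4 /\
  forall xs : 'rV[R]_n, g xs = 0 ->
  forall k : nat,
    enorm (x k.+1 - xs) ^+ 2 <= enorm (x k - xs) ^+ 2 - kappa4 * enorm (x k - z k) ^+ 2.
Proof.
move=> f_convex f_grad L_gt0 g_lip _ mu_gt0 mu_lt_nu nu_lt1 hlow_gt0 hlow_lt1 gam00_ge1 gam00_le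
  hbar_lt beta_ge0 beta_le1 theta_gt0 theta_lt1 _ eta_gt0 eta_lt2
  [_ [gx_neq0 line_search z_def x_next gam0_next]] alpha_min kappa4.
have Lhbar_lt4 : L * hbar < 4 by rewrite mulrC -ltr_pdivlMr.
have c_gt0 := descent_coef_gt0 Lhbar_lt4 beta_ge0 beta_le1 nu_lt1.
split=> [|xs gxs k].
  apply: mulr_gt0 => //; apply: mulr_gt0; last exact: divr_gt0 (direction_coef_gt0 _ _).
  by apply: mulr_gt0; rewrite // subr_gt0.
have hlow_le : hlow <= hbar by lra.
have /andP[gam0_gt0 gam0_le] : 0 < gam0 k <= hbar.
  case: k => [|k]; first by rewrite gam00_le andbT (lt_le_trans ltr01).
  suff proj_bounds t : 0 < proj_int hlow hbar t <= hbar by rewrite gam0_next; case: ifP.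
  by have /andP[lo ->] := proj_int_bounds t hlow_le; rewrite (lt_le_trans hlow_gt0).
have [h_gt0 h_le ratio_le] :=
  ls_result_bounds theta_gt0 theta_lt1 (ltW (lt_trans mu_gt0 mu_lt_nu)) gam0_gt0 (line_search k).
rewrite x_next.
apply: (algorithm3_step_decrease L_gt0 (gradient_cocoercive f_convex f_grad g_lip L_gt0)) => //.
- exact: le_trans gam0_le.
- exact: ltW.
- exact: ltW.
Qed.
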